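(* Let $(\mathcal X,d)$ be a metric space and $M>0$ an integer, and suppose $\mathcal X$ contains two $M$-configurations $P$ and $Q$ with $d(u,v)\ge 4$ for all $u\in P$, $v\in Q$. Let $b\le M/2$ be a nonnegative integer. Then there is no deterministic incremental algorithm with $b$ bits of storage that, for every finite set $D\subset\mathcal X$ which has a unique nice $3$-clustering $\mathcal C$ and for every ordering of $D$, outputs $\mathcal C$ after processing $D$ in that order.
   Context: A clustering of a set $D$ is a set of nonempty, pairwise disjoint subsets (clusters) whose union is $D$; a $k$-clustering has exactly $k$ clusters. Write $x\sim_{\mathcal C}y$ if $x,y$ are in the same cluster of $\mathcal C$ and $x\not\sim_{\mathcal C}y$ otherwise. A clustering $\mathcal C$ of $(D,d)$ is nice if for all $x,y,z\in D$: $d(y,x)<d(z,x)$ whenever $x\sim_{\mathcal C}y$ and $x\not\sim_{\mathcal C}z$. For an integer $M>0$, an $M$-configuration in a metric space $(\mathcal X,d)$ is a collection of $2M+1$ points $x_o,x_1,\ldots,x_M,x_1',\ldots,x_M'\in\mathcal X$ such that: (i) all pairwise distances among them lie in $[1,2]$; (ii) $d(x_o,x_i),d(x_o,x_i')\in(3/2,2]$ for all $i\ge1$; (iii) $d(x_i,x_j),d(x_i',x_j'),d(x_i,x_j')\in[1,3/2]$ for all $i\ne j$, $i,j\ge 1$; (iv) $d(x_i,x_i')>d(x_o,x_i)$ for all $i\ge1$. A deterministic incremental algorithm with $b$ bits of storage on $\mathcal X$ consists of an initial state $\sigma_0\in\{0,1\}^b$, a transition map $\tau:\{0,1\}^b\times\mathcal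 X\to\{0,1\}^b$, and an output map $\omega$ assigning to each state a partition of $\mathcal X$. On an input sequence $x_1,\ldots,x_n$ it computes states $\sigma_m=\tau(\sigma_{m-1},x_m)$ for $m=1,\ldots,n$, and its output is $\omega(\sigma_n)$; it outputs a clustering $\mathcal C$ of $D=\{x_1,\ldots,x_n\}$ if the restriction of $\omega(\sigma_n)$ to $D$ equals $\mathcal C$. *)

From Stdlib Require Import Reals List Vector.
Open Scope R_scope.
Set Implicit Arguments.

Definition is_metric (X : Type) (d : X -> X -> R) : Prop :=
  (forall x y, 0 <= d x y) /\
  (forall x y, d x y = 0 <-> x = y) /\
  (forall x y, d x y = d y x) /\
  (forall x y z, d x z <= d x y + d y z).

(* Subsets of X are predicates; families of subsets are predicates on predicates.
   Equality of subsets / families is extensional. *)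
Definition subset_eq (X : Type) (A B : X -> Prop) : Prop := forall x, A x <-> B x.

Definition fam_eq (X : Type) (C C' : (X -> Prop) -> Prop) : Prop :=
  (forall A, C A -> exists B, C' B /\ subset_eq A B) /\
  (forall B, C' B -> exists A, C A /\ subset_eq A B).

Definition is_clustering (X : Type) (D : X -> Prop) (C : (X -> Prop) -> Prop) : Prop :=
  (forall A, C A -> (exists x, A x) /\ (forall x, A x -> D x)) /\
  (forall A B, C A -> C B -> (exists x, A x /\ B x) -> subset_eq A B) /\
  (forall x, D x -> exists A, C A /\ A x).

Definition has_k_clusters (X : Type) (C : (X -> Prop) -> Prop) (k : nat) : Prop :=
  exists l : list (X -> Prop),
    List.length l = k /\
    (forall A, List.In A l -> C A) /\
    (forall A, C A -> exists B, List.In B l /\ subset_eq A B) /\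
    ForallOrdPairs (fun A B => ~ subset_eq A B) l.

Definition k_clustering (X : Type) (D : X -> Prop) (k : nat) (C : (X -> Prop) -> Prop) : Prop :=
  is_clustering D C /\ has_k_clusters C k.

Definition same_cluster (X : Type) (C : (X -> Prop) -> Prop) (x y : X) : Prop :=
  exists A, C A /\ A x /\ A y.

Definition nice (X : Type) (d : X -> X -> R) (D : X -> Prop) (C : (X -> Prop) -> Prop) : Prop :=
  forall x y z, D x -> D y -> D z ->
    same_cluster C x y -> ~ same_cluster C x z -> d y x < d z x.

Definition unique_nice_k_clustering (X : Type) (d : X -> X -> R) (D : X -> Prop) (k : nat)
    (C : (X -> Prop) -> Prop) : Prop :=
  k_clustering D k C /\ nice d D C /\
  (forall C', k_clustering D k C' -> nice d D C' -> fam_eq C' C).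

Definition restrict (X : Type) (P : (X -> Prop) -> Prop) (D : X -> Prop) : (X -> Prop) -> Prop :=
  fun A => exists B, P B /\ (exists x, B x /\ D x) /\ (forall x, A x <-> (B x /\ D x)).

(* M-configuration: points xo, xs 1..M, xs' 1..M. *)
Record config (X : Type) := mkConfig { c_o : X; c_x : nat -> X; c_x' : nat -> X }.

Definition in12 (r : R) : Prop := 1 <= r <= 2.

Definition is_M_config (X : Type) (d : X -> X -> R) (M : nat) (P : config X) : Prop :=
  let xo := c_o P in let x := c_x P in let x' := c_x' P in
  (forall i, (1 <= i <= M)%nat ->
     in12 (d xo (x i)) /\ in12 (d xo (x' i)) /\ in12 (d (x i) (x' i))) /\
  (forall i j, (1 <= i <= M)%nat -> (1 <= j <= M)%nat -> i <> j ->
     in12 (d (x i) (x j)) /\ in12 (d (x' i) (x' j)) /\ in12 (d (x i) (x' j))) /\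
  (forall i, (1 <= i <= M)%nat ->
     3/2 < d xo (x i) <= 2 /\ 3/2 < d xo (x' i) <= 2) /\
  (forall i j, (1 <= i <= M)%nat -> (1 <= j <= M)%nat -> i <> j ->
     1 <= d (x i) (x j) <= 3/2 /\ 1 <= d (x' i) (x' j) <= 3/2 /\ 1 <= d (x i) (x' j) <= 3/2) /\
  (forall i, (1 <= i <= M)%nat -> d (x i) (x' i) > d xo (x i)).

Definition in_config (X : Type) (M : nat) (P : config X) (u : X) : Prop :=
  u = c_o P \/ exists i, (1 <= i <= M)%nat /\ (u = c_x P i \/ u = c_x' P i).

Definition run (S X : Type) (tau : S -> X -> S) (s0 : S) (l : list X) : S :=
  List.fold_left tau l s0.

(* A set of labelled points that contains
   both origins, a pair [x_j], [x'_j] of one configuration together with a further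
   non-origin point of it, and non-origin points but no such pair of the other
   configuration, has a unique nice 3-clustering: the first configuration, the other
   origin, and the rest of the other configuration.  Feed the algorithm [x_1], ..., [x_M],
   each taken from the configuration selected by the corresponding bit of a word, and
   then a probe made of both origins, both points [x'_i] and one point [x'_k].  If two
   words differing at [i] lead to the same state, the output must put the origin and
   [x'_i] of one configuration both together and apart.  A suitable [k] exists unless,
   in both words, the bit at [i] differs from all other bits; the words starting with 1
   together with the zero word avoid this, and there are [2^(M-1) + 1 > 2^b] of them.
   Without storage the output partition is fixed: three-point sets force it to separate
   [x_o] from [x_1] and from [x'_1], while a four- or five-point set forces the nearer of
   the two (or both) into the cluster of [x_o]. *)

From Stdlib Require Import Reals List Vector Lra Lia Classical FinFun.
Open Scope R_scope.
Import List ListNotations.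
Set Implicit Arguments.
Unset Strict Implicit.

Section Clusterings.
Variables (X : Type) (D : X -> Prop).
Implicit Types (C : (X -> Prop) -> Prop) (A B : X -> Prop).

Lemma same_cluster_sym C x y : same_cluster C x y -> same_cluster C y x.
Proof. intros (A & HA & Hx & Hy); exists A; auto. Qed.

Lemma same_cluster_trans C x y z : is_clustering D C ->
  same_cluster C x y -> same_cluster C y z -> same_cluster C x z.
Proof.
  intros (_ & Hdisj & _) (A & HA & Hx & Hy) (B & HB & Hy' & Hz).
  exists A; repeat split; auto.
  apply (Hdisj A B HA HB (ex_intro _ y (conj Hy Hy'))); auto.
Qed.

Lemma same_cluster_refl C x : is_clustering D C -> D x -> same_cluster C x x.
Proof. intros (_ & _ & Hcov) Hx. destruct (Hcov x Hx) as (A & HA & Ax). exists A; auto. Qed.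

Lemma three_clustering_blocks C : k_clustering D 3 C ->
  exists B1 B2 B3, C B1 /\ C B2 /\ C B3 /\
    (forall x, D x -> B1 x \/ B2 x \/ B3 x) /\
    (exists r1 r2 r3, D r1 /\ D r2 /\ D r3 /\ B1 r1 /\ B2 r2 /\ B3 r3) /\
    ~ subset_eq B1 B2 /\ ~ subset_eq B1 B3 /\ ~ subset_eq B2 B3.
Proof.
  intros ((Hne & _ & Hcov) & l & Hlen & Hin & Hall & Hdist).
  destruct l as [|B1 [|B2 [|B3 [|B4 l]]]]; simpl in Hlen; try discriminate.
  exists B1, B2, B3.
  assert (C1 : C B1) by (apply Hin; simpl; auto).
  assert (C2 : C B2) by (apply Hin; simpl; auto).
  assert (C3 : C B3) by (apply Hin; simpl; auto).
  inversion_clear Hdist as [|? ? H1 Hdist']; inversion_clear H1 as [|? ? N12 H1'].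
  inversion_clear H1'; inversion_clear Hdist' as [|? ? H2 _]; inversion_clear H2.
  repeat split; auto.
  - intros x Hx. destruct (Hcov x Hx) as (A & HA & Ax).
    destruct (Hall A HA) as (B & HB & Heq). apply Heq in Ax.
    simpl in HB; destruct HB as [<- | [<- | [<- | []]]]; auto.
  - destruct (Hne B1 C1) as [[r1 R1] HD1], (Hne B2 C2) as [[r2 R2] HD2],
      (Hne B3 C3) as [[r3 R3] HD3].
    exists r1, r2, r3; repeat split; auto.
Qed.

Lemma three_clustering_pigeonhole C a b c e : k_clustering D 3 C ->
  D a -> D b -> D c -> D e ->
  same_cluster C a b \/ same_cluster C a c \/ same_cluster C a e \/
  same_cluster C b c \/ same_cluster C b e \/ same_cluster C c e.
Proof.
  intros Hk Ha Hb Hc He.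
  destruct (three_clustering_blocks Hk) as (B1 & B2 & B3 & C1 & C2 & C3 & Hcov & _).
  assert (Hin : forall B x y, C B -> B x -> B y -> same_cluster C x y) by (intros; exists B; auto).
  destruct (Hcov a Ha) as [Ha'|[Ha'|Ha']], (Hcov b Hb) as [Hb'|[Hb'|Hb']],
    (Hcov c Hc) as [Hc'|[Hc'|Hc']], (Hcov e He) as [He'|[He'|He']];
  solve [ left; eauto | right; left; eauto | do 2 right; left; eauto
        | do 3 right; left; eauto | do 4 right; left; eauto | do 5 right; eauto ].
Qed.

Lemma three_clustering_separated C : k_clustering D 3 C ->
  exists r1 r2 r3, D r1 /\ D r2 /\ D r3 /\ ~ same_cluster C r1 r2 /\
    ~ same_cluster C r1 r3 /\ ~ same_cluster C r2 r3.
Proof.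
  intros Hk. pose proof Hk as [(_ & Hdisj & _) _].
  destruct (three_clustering_blocks Hk) as (B1 & B2 & B3 & C1 & C2 & C3 & _ &
    (r1 & r2 & r3 & D1 & D2 & D3 & H1 & H2 & H3) & N12 & N13 & N23).
  assert (Hsep : forall B B' r r', C B -> C B' -> B r -> B' r' -> ~ subset_eq B B' ->
            ~ same_cluster C r r').
  { intros B B' r r' HB HB' Br Br' N (A & HA & Ar & Ar'). apply N; intro z.
    pose proof (Hdisj A B HA HB (ex_intro _ r (conj Ar Br)) z).
    pose proof (Hdisj A B' HA HB' (ex_intro _ r' (conj Ar' Br')) z). tauto. }
  exists r1, r2, r3; repeat split; eauto.
Qed.

Lemma three_clustering_not_two_classes C u v : k_clustering D 3 C ->
  ~ (forall x, D x -> same_cluster C x u \/ same_cluster C x v).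
Proof.
  intros Hk H. pose proof Hk as [Hcl _].
  destruct (three_clustering_separated Hk) as (r1 & r2 & r3 & D1 & D2 & D3 & N12 & N13 & N23).
  assert (Hjoin : forall x y w, same_cluster C x w -> same_cluster C y w -> same_cluster C x y)
    by (intros x y w Hx Hy; apply (same_cluster_trans Hcl Hx (same_cluster_sym Hy))).
  destruct (H r1 D1), (H r2 D2), (H r3 D3); eauto.
Qed.

Lemma three_clustering_other_cluster C x : k_clustering D 3 C -> D x ->
  exists z, D z /\ ~ same_cluster C x z.
Proof.
  intros Hk Hx. pose proof Hk as [Hcl _].
  destruct (three_clustering_separated Hk) as (r1 & r2 & _ & D1 & D2 & _ & N12 & _).
  destruct (classic (same_cluster C x r1)) as [S1|S1]; [|eauto].
  exists r2; split; auto. intro S2. apply N12.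
  exact (same_cluster_trans Hcl (same_cluster_sym S1) S2).
Qed.

Lemma fam_eq_of_same_cluster C1 C2 : is_clustering D C1 -> is_clustering D C2 ->
  (forall x y, D x -> D y -> same_cluster C1 x y <-> same_cluster C2 x y) ->
  fam_eq C1 C2.
Proof.
  assert (Hincl : forall C C', is_clustering D C -> is_clustering D C' ->
    (forall x y, D x -> D y -> same_cluster C x y <-> same_cluster C' x y) ->
    forall A, C A -> exists B, C' B /\ subset_eq A B).
  { intros C C' (Hne & Hdisj & _) (Hne' & Hdisj' & Hcov') Heq A HA.
    destruct (Hne A HA) as [[a Aa] HAD].
    destruct (Hcov' a (HAD a Aa)) as (B & HB & Ba).
    exists B; split; auto; intro y; split; intro Hy.
    - assert (Hay : same_cluster C' a y) by (apply Heq; auto; exists A; auto).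
      destruct Hay as (B' & HB' & Ba' & By).
      apply (Hdisj' B' B HB' HB (ex_intro _ a (conj Ba' Ba))); auto.
    - assert (Dy : D y) by (apply (proj2 (Hne' B HB)); auto).
      assert (Hay : same_cluster C a y) by (apply Heq; auto; exists B; auto).
      destruct Hay as (A' & HA' & Aa' & Ay).
      apply (Hdisj A' A HA' HA (ex_intro _ a (conj Aa' Aa))); auto. }
  intros H1 H2 Heq; split; [now apply Hincl|].
  intros B HB. destruct (Hincl C2 C1 H2 H1) with B as (A & HA & HBA); auto.
  - intros x y Dx Dy; symmetry; auto.
  - exists A; split; auto. intro y; symmetry; apply HBA.
Qed.

Definition blocks3 (B1 B2 B3 : X -> Prop) : (X -> Prop) -> Prop :=
  fun A => A = B1 \/ A = B2 \/ A = B3.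

Definition same_block3 (B1 B2 B3 : X -> Prop) (x y : X) : Prop :=
  (B1 x /\ B1 y) \/ (B2 x /\ B2 y) \/ (B3 x /\ B3 y).

Definition partition3 (B1 B2 B3 : X -> Prop) : Prop :=
  (forall x, B1 x -> D x) /\ (forall x, B2 x -> D x) /\ (forall x, B3 x -> D x) /\
  (exists x, B1 x) /\ (exists x, B2 x) /\ (exists x, B3 x) /\
  (forall x, B1 x -> B2 x -> False) /\ (forall x, B1 x -> B3 x -> False) /\
  (forall x, B2 x -> B3 x -> False) /\
  (forall x, D x -> B1 x \/ B2 x \/ B3 x).

Lemma partition3_of_lists (l1 l2 l3 : list X) :
  (forall z, D z <-> In z (l1 ++ l2 ++ l3)) -> NoDup (l1 ++ l2 ++ l3) ->
  l1 <> [] -> l2 <> [] -> l3 <> [] ->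
  partition3 (fun z => In z l1) (fun z => In z l2) (fun z => In z l3).
Proof.
  intros HD Hnd N1 N2 N3.
  assert (Hdisj : forall (l l' : list X) z, NoDup (l ++ l') -> In z l -> In z l' -> False).
  { intros l l' z. induction l as [|w l IH]; simpl; [tauto|]; intros H [<-|Hz] Hz'.
    - inversion_clear H as [|? ? Hn _]; apply Hn, in_or_app; auto.
    - inversion_clear H; eauto. }
  assert (Hne : forall l : list X, l <> [] -> exists z, In z l)
    by (intros [|w l] N; [congruence|exists w; simpl; auto]).
  unfold partition3; repeat split; auto;
    try (intros z Hz; apply HD; rewrite !in_app_iff; tauto).
  - intros z H1 H2. apply (Hdisj l1 (l2 ++ l3) z); auto. apply in_or_app; auto.
  - intros z H1 H3. apply (Hdisj l1 (l2 ++ l3) z); auto. apply in_or_app; auto.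
  - intros z H2 H3. apply (Hdisj l2 l3 z); auto. apply (NoDup_app_remove_l l1); auto.
  - intros z Hz; apply HD in Hz; rewrite !in_app_iff in Hz; tauto.
Qed.

Lemma same_cluster_blocks3 B1 B2 B3 x y :
  same_cluster (blocks3 B1 B2 B3) x y <-> same_block3 B1 B2 B3 x y.
Proof.
  unfold same_cluster, blocks3, same_block3; split.
  - intros (A & [-> | [-> | ->]] & Hx & Hy); auto.
  - intros [[Hx Hy]|[[Hx Hy]|[Hx Hy]]]; [exists B1|exists B2|exists B3]; auto.
Qed.

Lemma blocks3_k_clustering B1 B2 B3 : partition3 B1 B2 B3 ->
  k_clustering D 3 (blocks3 B1 B2 B3).
Proof.
  intros (S1 & S2 & S3 & [e1 E1] & [e2 E2] & [e3 E3] & N12 & N13 & N23 & Cov).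
  split; [split; [|split]|].
  - intros A [-> | [-> | ->]]; eauto.
  - intros A B [-> | [-> | ->]] [-> | [-> | ->]] [x [Ha Hb]];
      try (intro; tauto); exfalso; eauto.
  - intros x Hx. unfold blocks3. destruct (Cov x Hx) as [H|[H|H]]; eauto.
  - exists [B1; B2; B3]; split; [reflexivity|split; [|split]].
    + intros A [<- | [<- | [<- | []]]]; unfold blocks3; auto.
    + intros A [-> | [-> | ->]]; [exists B1|exists B2|exists B3];
        simpl; split; auto; intro; tauto.
    + repeat constructor; intro H;
        [apply (N12 e1)|apply (N13 e1)|apply (N23 e2)]; auto; apply H; auto.
Qed.

Lemma blocks3_unique_nice (d : X -> X -> R) B1 B2 B3 : partition3 B1 B2 B3 ->
  nice d D (blocks3 B1 B2 B3) ->
  (forall C', k_clustering D 3 C' -> nice d D C' ->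
     forall x y, D x -> D y -> same_cluster C' x y -> same_block3 B1 B2 B3 x y) ->
  unique_nice_k_clustering d D 3 (blocks3 B1 B2 B3).
Proof.
  intros Hb Hnice Hfiner. pose proof (blocks3_k_clustering Hb) as Hk.
  split; [|split]; auto.
  intros C' Hk' Hn'. apply fam_eq_of_same_cluster; [apply Hk'|apply Hk|].
  intros x y Dx Dy. rewrite same_cluster_blocks3.
  split; [apply Hfiner; auto|intros Hxy].
  destruct Hb as (S1 & S2 & S3 & [e1 E1] & [e2 E2] & [e3 E3] & N12 & N13 & N23 & _).
  destruct (classic (same_cluster C' x y)) as [|Nxy]; auto. exfalso.
  assert (Hsame := Hfiner C' Hk' Hn').
  unfold same_block3 in *.
  destruct Hxy as [[Hx Hy]|[[Hx Hy]|[Hx Hy]]];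
  [ destruct (three_clustering_pigeonhole Hk' Dx Dy (S2 e2 E2) (S3 e3 E3))
      as [F|[F|[F|[F|[F|F]]]]]
  | destruct (three_clustering_pigeonhole Hk' Dx Dy (S1 e1 E1) (S3 e3 E3))
      as [F|[F|[F|[F|[F|F]]]]]
  | destruct (three_clustering_pigeonhole Hk' Dx Dy (S1 e1 E1) (S2 e2 E2))
      as [F|[F|[F|[F|[F|F]]]]] ];
  try (exact (Nxy F)); apply Hsame in F; auto; firstorder.
Qed.

End Clusterings.

Lemma fam_eq_restrict_same_cluster (X : Type) (Pi : (X -> Prop) -> Prop) (D : X -> Prop)
  C x y : fam_eq (restrict Pi D) C -> D x -> D y ->
  same_cluster C x y <-> same_cluster Pi x y.
Proof.
  intros [Hto Hfrom] Dx Dy; split.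
  - intros (A & HA & Ax & Ay).
    destruct (Hfrom A HA) as (A0 & (B & HB & _ & HBD) & HA0).
    exists B; split; [|split]; [auto|apply HBD, HA0, Ax|apply HBD, HA0, Ay].
  - intros (B & HB & Bx & By).
    destruct (Hto (fun z => B z /\ D z)) as (A & HA & HBA).
    + exists B; split; auto. split; [exists x; auto|]. intro; tauto.
    + exists A; split; auto. split; apply HBA; auto.
Qed.

Section Metric.
Variables (X : Type) (d : X -> X -> R).
Hypothesis Hd : is_metric d.

Lemma dist_self x : d x x = 0.
Proof. apply Hd; reflexivity. Qed.

Lemma dist_sym x y : d x y = d y x.
Proof. apply Hd. Qed.

Lemma dist_pos x y : x <> y -> 0 < d x y.
Proof.
  intros N. destruct (proj1 Hd x y) as [|E]; auto.
  exfalso; apply N, Hd; auto.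
Qed.

Lemma blocks3_nice (D : X -> Prop) B1 B2 B3 :
  (forall x y z, D x -> D y -> D z -> x <> y -> same_block3 B1 B2 B3 x y ->
     ~ same_block3 B1 B2 B3 x z -> d y x < d z x) ->
  nice d D (blocks3 B1 B2 B3).
Proof.
  intros H x y z Dx Dy Dz Sxy Nxz. rewrite same_cluster_blocks3 in Sxy, Nxz.
  destruct (classic (x = y)) as [<-|Nxy]; auto.
  rewrite dist_self; apply dist_pos; intros ->; exact (Nxz Sxy).
Qed.

Lemma singletons_unique_nice a b c : NoDup [a; b; c] ->
  unique_nice_k_clustering d (fun x => In x [a; b; c]) 3
    (blocks3 (fun x => In x [a]) (fun x => In x [b]) (fun x => In x [c])).
Proof.
  intros Hnd. apply blocks3_unique_nice.
  - apply (partition3_of_lists (l1 := [a]) (l2 := [b]) (l3 := [c]));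
      [intro; tauto|exact Hnd|discriminate..].
  - apply blocks3_nice; intros x y z _ _ _ Nxy Sxy _.
    unfold same_block3 in Sxy; simpl in Sxy; intuition congruence.
  - intros C' Hk' _ x y Dx Dy Sxy. unfold same_block3; simpl. pose proof (proj1 Hk') as Hcl.
    simpl in Dx, Dy; destruct Dx as [<-|[<-|[<-|[]]]], Dy as [<-|[<-|[<-|[]]]];
      try tauto; exfalso;
    let cover u v :=
      apply (three_clustering_not_two_classes (u := u) (v := v) Hk');
      intros z [<-|[<-|[<-|[]]]];
      solve [ left; apply (same_cluster_refl Hcl); simpl; auto
            | right; apply (same_cluster_refl Hcl); simpl; auto
            | left; exact Sxy | left; exact (same_cluster_sym Sxy)
            | right; exact Sxy | right; exact (same_cluster_sym Sxy) ] in
    first [ solve [cover a c] | solve [cover a b] | solve [cover b a] ].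
Qed.

End Metric.

Inductive label := LO | LX (i : nat) | LX' (i : nat).

Definition label_valid (M : nat) (t : label) : Prop :=
  match t with LO => True | LX i | LX' i => (1 <= i <= M)%nat end.

Definition label_index (t : label) : nat :=
  match t with LO => 0%nat | LX i | LX' i => i end.

Lemma label_eq_dec (s t : label) : {s = t} + {s <> t}.
Proof. decide equality; apply PeanoNat.Nat.eq_dec. Qed.

Lemma label_same_index t1 t2 : t1 <> LO -> t2 <> LO -> t1 <> t2 ->
  label_index t1 = label_index t2 ->
  (t1 = LX (label_index t1) /\ t2 = LX' (label_index t1)) \/
  (t1 = LX' (label_index t1) /\ t2 = LX (label_index t1)).
Proof. destruct t1, t2; simpl; intros; subst; try congruence; auto. Qed.

Definition config_point (X : Type) (cf : config X) (t : label) : X :=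
  match t with LO => c_o cf | LX i => c_x cf i | LX' i => c_x' cf i end.

Section Configuration.
Variables (X : Type) (d : X -> X -> R) (M : nat) (cf : config X).
Hypothesis Hd : is_metric d.
Hypothesis Hcf : is_M_config d M cf.
Notation pc := (config_point cf).

Lemma config_dist_bounds t1 t2 : label_valid M t1 -> label_valid M t2 -> t1 <> t2 ->
  1 <= d (pc t1) (pc t2) <= 2.
Proof.
  destruct Hcf as (H1 & H2 & _).
  destruct t1 as [|i|i], t2 as [|j|j]; simpl; intros V1 V2 N; unfold in12 in *;
    try congruence; try destruct (PeanoNat.Nat.eq_dec i j) as [<-|Nij];
    first [ apply H1 | rewrite (dist_sym Hd); apply H1
          | apply H2 | rewrite (dist_sym Hd); apply H2 ]; auto; congruence.
Qed.

Lemma config_dist_origin t : label_valid M t -> t <> LO -> 3/2 < d (pc LO) (pc t).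
Proof.
  destruct Hcf as (_ & _ & H3 & _).
  destruct t as [|i|i]; simpl; intros V N; [congruence| |]; apply H3; auto.
Qed.

Lemma config_dist_other_index t1 t2 : label_valid M t1 -> label_valid M t2 ->
  t1 <> LO -> t2 <> LO -> label_index t1 <> label_index t2 -> d (pc t1) (pc t2) <= 3/2.
Proof.
  destruct Hcf as (_ & _ & _ & H4 & _).
  destruct t1 as [|i|i], t2 as [|j|j]; simpl; intros V1 V2 N1 N2 Nij; try congruence;
    first [apply H4; auto | rewrite (dist_sym Hd); apply H4; auto].
Qed.

Lemma config_dist_pair i : label_valid M (LX i) ->
  d (pc (LO)) (pc (LX i)) < d (pc (LX i)) (pc (LX' i)).
Proof. destruct Hcf as (_ & _ & _ & _ & H5). simpl; intros; apply H5; auto. Qed.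

Lemma in_config_point t : label_valid M t -> in_config M cf (pc t).
Proof. unfold in_config; destruct t as [|i|i]; simpl; intros V; auto; right; exists i; auto. Qed.

End Configuration.

Lemma run_app (S X : Type) (tau : S -> X -> S) s0 l1 l2 :
  run tau s0 (l1 ++ l2) = run tau (run tau s0 l1) l2.
Proof. apply fold_left_app. Qed.

Lemma pigeonhole (A B : Type) (f : A -> B) (l : list A) (L : list B) : NoDup l ->
  (forall a, In a l -> In (f a) L) -> (length L < length l)%nat ->
  exists a1 a2, In a1 l /\ In a2 l /\ a1 <> a2 /\ f a1 = f a2.
Proof.
  intros Hn Hin Hlt. apply NNPP; intro Hno.
  assert (Hinj : ForallPairs (fun x y => f x = f y -> x = y) l).
  { intros x y Hx Hy E. apply NNPP; intro N. apply Hno; exists x, y; auto. }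
  assert (Hincl : incl (map f l) L)
    by (intros b Hb; apply in_map_iff in Hb as (a & <- & Ha); auto).
  pose proof (NoDup_incl_length (NoDup_map_NoDup_ForallPairs f Hinj Hn) Hincl).
  rewrite length_map in *; lia.
Qed.

Lemma nth_differ (l1 l2 : list bool) : length l1 = length l2 -> l1 <> l2 ->
  exists i, (i < length l1)%nat /\ nth i l1 false <> nth i l2 false.
Proof.
  intros E N. apply NNPP; intro Hno. apply N, (nth_ext l1 l2 false false E).
  intros i Hi. apply NNPP; intro Ni. apply Hno; eauto.
Qed.

Fixpoint bool_lists (n : nat) : list (list bool) :=
  match n with
  | O => [[]]
  | S n => map (cons true) (bool_lists n) ++ map (cons false) (bool_lists n)
  end.

Lemma length_bool_lists n : length (bool_lists n) = (2 ^ n)%nat.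
Proof. induction n; simpl; auto. rewrite length_app, !length_map, IHn. lia. Qed.

Lemma In_bool_lists n l : In l (bool_lists n) <-> length l = n.
Proof.
  revert l; induction n as [|n IH]; intros l; simpl.
  - destruct l; split; intuition discriminate.
  - rewrite in_app_iff, !in_map_iff. split.
    + intros [(l' & <- & H)|(l' & <- & H)]; simpl; f_equal; apply IH; auto.
    + destruct l as [|[] l]; simpl; intros E; try discriminate; injection E as E;
        [left|right]; exists l; rewrite IH; auto.
Qed.

Lemma NoDup_bool_lists n : NoDup (bool_lists n).
Proof.
  induction n; simpl; [repeat constructor; simpl; tauto|].
  apply NoDup_app; try (apply Injective_map_NoDup; auto; intros a b E; injection E; auto).
  intros a Ha Hb. apply in_map_iff in Ha as (x & <- & _). apply in_map_iff in Hb as (y & E & _).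
  discriminate.
Qed.

Definition prefix_family (M : nat) : list (list bool) :=
  map (cons true) (bool_lists (M - 1)) ++ [repeat false M].

Lemma length_prefix_family M : length (prefix_family M) = (2 ^ (M - 1) + 1)%nat.
Proof. unfold prefix_family; rewrite length_app, length_map, length_bool_lists; auto. Qed.

Lemma NoDup_prefix_family M : NoDup (prefix_family M).
Proof.
  apply NoDup_app.
  - apply Injective_map_NoDup; [intros a b E; injection E; auto|apply NoDup_bool_lists].
  - repeat constructor; simpl; tauto.
  - intros f Hf [E|[]]. apply in_map_iff in Hf as (g & <- & _).
    destruct M; discriminate.
Qed.

Lemma length_in_prefix_family M f : (1 <= M)%nat -> In f (prefix_family M) -> length f = M.
Proof.
  intros HM Hf. apply in_app_iff in Hf as [Hf|[<-|[]]]; [|apply repeat_length].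
  apply in_map_iff in Hf as (g & <- & Hg). apply In_bool_lists in Hg. simpl; lia.
Qed.

Lemma prefix_family_split M f1 f2 : (2 <= M)%nat ->
  In f1 (prefix_family M) -> In f2 (prefix_family M) -> f1 <> f2 ->
  exists i k, (i < M)%nat /\ (k < M)%nat /\ i <> k /\ nth i f1 false <> nth i f2 false /\
    (nth k f1 false = nth i f1 false \/ nth k f2 false = nth i f2 false).
Proof.
  intros HM H1 H2 N.
  assert (Hrep : forall k, nth k (repeat false M) false = false)
    by (intro k; apply nth_repeat).
  unfold prefix_family in H1, H2; rewrite in_app_iff, in_map_iff in H1, H2.
  destruct H1 as [(g1 & <- & G1)|[<-|[]]], H2 as [(g2 & <- & G2)|[<-|[]]].
  - apply In_bool_lists in G1, G2.
    destruct (nth_differ (l1 := g1) (l2 := g2)) as (i & Hi & Hne); [congruence|congruence|].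
    exists (S i), 0%nat; simpl; repeat split; try lia; auto.
    destruct (nth i g1 false); [left|right]; auto; destruct (nth i g2 false); congruence.
  - exists 0%nat, 1%nat; rewrite !Hrep; simpl; repeat split; auto; lia.
  - exists 0%nat, 1%nat; rewrite !Hrep; simpl; repeat split; auto; lia.
  - congruence.
Qed.

Section TwoConfigurations.
Variables (X : Type) (d : X -> X -> R) (M : nat) (P Q : config X).
Hypothesis Hd : is_metric d.
Hypothesis HP : is_M_config d M P.
Hypothesis HQ : is_M_config d M Q.
Hypothesis Hfar : forall u v, in_config M P u -> in_config M Q v -> 4 <= d u v.

Definition pt (p : bool * label) : X := config_point (if fst p then P else Q) (snd p).

Definition valid_point (p : bool * label) : Prop := label_valid M (snd p).

Definition all_valid (lp : list (bool * label)) : Prop := forall p, In p lp -> valid_point p.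

Definition point_set (lp : list (bool * label)) : X -> Prop := fun x => In x (map pt lp).

Lemma pt_dist_other_side p q : valid_point p -> valid_point q -> fst p <> fst q ->
  4 <= d (pt p) (pt q).
Proof.
  destruct p as [[|] s], q as [[|] t]; unfold valid_point, pt; simpl; intros Vp Vq N;
    try congruence; [|rewrite (dist_sym Hd)]; apply Hfar; apply in_config_point; auto.
Qed.

Lemma pt_dist_same_side p q : valid_point p -> valid_point q -> fst p = fst q ->
  d (pt p) (pt q) <= 2.
Proof.
  destruct p as [[|] s], q as [[|] t]; unfold valid_point, pt; simpl; intros Vp Vq E;
    try congruence; (destruct (label_eq_dec s t) as [<-|N];
    [rewrite (dist_self Hd); lra | eapply config_dist_bounds; eauto]).
Qed.

Lemma pt_dist_same_lt_other p q r : valid_point p -> valid_point q -> valid_point r ->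
  fst p = fst q -> fst r <> fst q -> d (pt p) (pt q) < d (pt r) (pt q).
Proof.
  intros Vp Vq Vr E F.
  pose proof (pt_dist_same_side Vp Vq E); pose proof (pt_dist_other_side Vr Vq F); lra.
Qed.

Lemma pt_dist_distinct p q : valid_point p -> valid_point q -> p <> q ->
  1 <= d (pt p) (pt q).
Proof.
  intros Vp Vq N. destruct (Bool.bool_dec (fst p) (fst q)) as [E|F].
  - destruct p as [s t], q as [s' t']; simpl in E; subst s'.
    assert (t <> t') by congruence.
    destruct s; eapply config_dist_bounds; eauto.
  - pose proof (pt_dist_other_side Vp Vq F); lra.
Qed.

Lemma pt_inj p q : valid_point p -> valid_point q -> pt p = pt q -> p = q.
Proof.
  intros Vp Vq E. destruct (classic (p = q)) as [|N]; auto. exfalso.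
  pose proof (pt_dist_distinct Vp Vq N). rewrite E, (dist_self Hd) in H; lra.
Qed.

Lemma pt_dist_origin s t : valid_point (s, t) -> t <> LO -> 3/2 < d (pt (s, LO)) (pt (s, t)).
Proof. unfold valid_point, pt; destruct s; apply config_dist_origin; auto. Qed.

Lemma pt_dist_other_index s t1 t2 : valid_point (s, t1) -> valid_point (s, t2) ->
  t1 <> LO -> t2 <> LO -> label_index t1 <> label_index t2 ->
  d (pt (s, t1)) (pt (s, t2)) <= 3/2.
Proof. unfold valid_point, pt; destruct s; apply config_dist_other_index; auto. Qed.

Lemma pt_dist_pair s i : valid_point (s, LX i) ->
  d (pt (s, LO)) (pt (s, LX i)) < d (pt (s, LX i)) (pt (s, LX' i)).
Proof. unfold valid_point, pt; destruct s; apply config_dist_pair; auto. Qed.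

Lemma point_set_In lp p : In p lp -> point_set lp (pt p).
Proof. apply in_map. Qed.

Lemma point_set_inv lp x : point_set lp x -> exists p, In p lp /\ x = pt p.
Proof. unfold point_set; rewrite in_map_iff; intros (p & <- & H); eauto. Qed.

Lemma NoDup_points lp : all_valid lp -> NoDup lp -> NoDup (map pt lp).
Proof.
  induction lp as [|a l IH]; simpl; intros Hv Hn; constructor; inversion_clear Hn as [|? ? Na Hl].
  - rewrite in_map_iff; intros (b & E & Hb). apply Na.
    rewrite (pt_inj (Hv b (or_intror Hb)) (Hv a (or_introl eq_refl)) E) in Hb; auto.
  - apply IH; auto. intros p Hp; apply Hv; simpl; auto.
Qed.

Section NiceClustering.
Variables (lp : list (bool * label)) (C : (X -> Prop) -> Prop).
Hypothesis Hv : all_valid lp.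
Hypothesis Hk : k_clustering (point_set lp) 3 C.
Hypothesis Hn : nice d (point_set lp) C.

(* A point [r] outside the common cluster lies within 2 of whichever of [p], [q] is on
   its side, while the other one is at distance at least 4. *)
Lemma nice_separates_sides p q : In p lp -> In q lp -> fst p <> fst q ->
  ~ same_cluster C (pt p) (pt q).
Proof.
  intros Hp Hq F S. pose proof (Hv Hp) as Vp. pose proof (Hv Hq) as Vq.
  destruct (three_clustering_other_cluster Hk (point_set_In Hp)) as [z [Dz Nz]].
  destruct (point_set_inv Dz) as [r [Hr ->]]. pose proof (Hv Hr) as Vr.
  destruct (Bool.bool_dec (fst r) (fst p)) as [E|E].
  - pose proof (Hn (point_set_In Hp) (point_set_In Hq) Dz S Nz).
    pose proof (pt_dist_other_side Vq Vp (not_eq_sym F)).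
    pose proof (pt_dist_same_side Vr Vp E). lra.
  - assert (Nq : ~ same_cluster C (pt q) (pt r))
      by (intro S'; apply Nz; exact (same_cluster_trans (proj1 Hk) S S')).
    pose proof (Hn (point_set_In Hq) (point_set_In Hp) Dz (same_cluster_sym S) Nq).
    pose proof (pt_dist_other_side Vp Vq F).
    assert (E' : fst r = fst q) by (destruct (fst r), (fst p), (fst q); simpl in *; congruence).
    pose proof (pt_dist_same_side Vr Vq E'). lra.
Qed.

(* Two of [x_o], [a], [c] and a point of the other configuration share a cluster, and
   [x_o] cannot take just one of [a], [c] since [d(a, c) <= 3/2 < d(x_o, a)]. *)
Lemma nice_joins_other_indices s a c : In (s, LO) lp ->
  (exists q, In q lp /\ fst q <> s) -> In (s, a) lp -> In (s, c) lp ->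
  a <> LO -> c <> LO -> label_index a <> label_index c ->
  same_cluster C (pt (s, a)) (pt (s, c)).
Proof.
  intros Ho [q [Hq Fq]] Ha Hc Na Nc Ni.
  destruct (classic (same_cluster C (pt (s, a)) (pt (s, c)))) as [|N]; auto. exfalso.
  pose proof (Hv Ha) as Va. pose proof (Hv Hc) as Vc.
  destruct (three_clustering_pigeonhole Hk (point_set_In Ho) (point_set_In Ha)
    (point_set_In Hc) (point_set_In Hq)) as [F|[F|[F|[F|[F|F]]]]].
  - pose proof (Hn (point_set_In Ha) (point_set_In Ho) (point_set_In Hc)
      (same_cluster_sym F) N).
    pose proof (pt_dist_origin Va Na).
    pose proof (pt_dist_other_index Vc Va Nc Na (not_eq_sym Ni)). lra.
  - pose proof (Hn (point_set_In Hc) (point_set_In Ho) (point_set_In Ha)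
      (same_cluster_sym F) (fun S => N (same_cluster_sym S))).
    pose proof (pt_dist_origin Vc Nc).
    pose proof (pt_dist_other_index Va Vc Na Nc Ni). lra.
  - apply (nice_separates_sides Ho Hq); auto.
  - exact (N F).
  - apply (nice_separates_sides Ha Hq); auto.
  - apply (nice_separates_sides Hc Hq); auto.
Qed.

End NiceClustering.

Definition bonded (lp : list (bool * label)) (U : bool) (j : nat) : Prop :=
  all_valid lp /\ In (U, LO) lp /\ In (negb U, LO) lp /\
  In (U, LX j) lp /\ In (U, LX' j) lp /\
  (exists t, In (U, t) lp /\ t <> LO /\ label_index t <> j) /\
  (forall i, In (negb U, LX i) lp -> In (negb U, LX' i) lp -> False) /\
  (exists t, In (negb U, t) lp /\ t <> LO).

Section Bonded.
Variables (lp : list (bool * label)) (U : bool) (j : nat) (t0 v0 : label).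
Hypothesis Hv : all_valid lp.
Hypothesis HoU : In (U, LO) lp.
Hypothesis HoV : In (negb U, LO) lp.
Hypothesis Hxj : In (U, LX j) lp.
Hypothesis Hx'j : In (U, LX' j) lp.
Hypothesis Ht0 : In (U, t0) lp.
Hypothesis Nt0 : t0 <> LO.
Hypothesis It0 : label_index t0 <> j.
Hypothesis Hpairless : forall i, In (negb U, LX i) lp -> In (negb U, LX' i) lp -> False.
Hypothesis Hv0 : In (negb U, v0) lp.
Hypothesis Nv0 : v0 <> LO.

Let B1 : X -> Prop := fun x => exists t, In (U, t) lp /\ x = pt (U, t).
Let B2 : X -> Prop := fun x => x = pt (negb U, LO).
Let B3 : X -> Prop := fun x => exists t, In (negb U, t) lp /\ t <> LO /\ x = pt (negb U, t).

Lemma bonded_partition : partition3 (point_set lp) B1 B2 B3.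
Proof.
  assert (NUV : U <> negb U) by (destruct U; discriminate).
  assert (Hinj : forall p q, In p lp -> In q lp -> pt p = pt q -> p = q)
    by (intros p q Hp Hq; apply pt_inj; auto).
  unfold partition3, B1, B2, B3; repeat split; eauto.
  - intros x (t & H & ->); apply point_set_In; auto.
  - intros x ->; apply point_set_In; auto.
  - intros x (t & H & _ & ->); apply point_set_In; auto.
  - intros x (t & H & ->) E. apply Hinj in E; auto; congruence.
  - intros x (t & H & ->) (t' & H' & _ & E). apply Hinj in E; auto; congruence.
  - intros x -> (t' & H' & N' & E). apply Hinj in E; auto; congruence.
  - intros x Dx. destruct (point_set_inv Dx) as ([s t] & H & ->).
    destruct (Bool.bool_dec s U) as [->|N]; [left; eauto|].
    replace s with (negb U) in * by (destruct s, U; simpl; congruence).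
    destruct (label_eq_dec t LO) as [->|N']; [right; left; auto|right; right; eauto].
Qed.

Lemma bonded_other_side_indices t1 t2 : In (negb U, t1) lp -> In (negb U, t2) lp ->
  t1 <> LO -> t2 <> LO -> t1 <> t2 -> label_index t1 <> label_index t2.
Proof.
  intros H1 H2 N1 N2 N12 E.
  destruct (label_same_index N1 N2 N12 E) as [[E1 E2]|[E1 E2]];
    rewrite E1 in H1; rewrite E2 in H2; eauto.
Qed.

Lemma bonded_blocks_nice : nice d (point_set lp) (blocks3 B1 B2 B3).
Proof.
  apply (blocks3_nice Hd); intros x y z Dx Dy Dz Nxy Sxy Nxz.
  destruct (point_set_inv Dz) as ([sz tz] & Hz & ->). pose proof (Hv Hz) as Vz.
  destruct Sxy as [[(tx & Hx & ->) (ty & Hy & ->)]|[[-> ->]|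
    [(tx & Hx & Nx & ->) (ty & Hy & Ny & ->)]]]; [|congruence|].
  - apply pt_dist_same_lt_other; auto; simpl.
    intro E; subst sz; apply Nxz; left; split; eexists; eauto.
  - destruct (Bool.bool_dec sz (negb U)) as [->|Fz]; [|apply pt_dist_same_lt_other; auto].
    destruct (label_eq_dec tz LO) as [->|Nz];
      [|exfalso; apply Nxz; right; right; split; eexists; eauto].
    pose proof (pt_dist_origin (Hv Hx) Nx).
    pose proof (pt_dist_other_index (Hv Hy) (Hv Hx) Ny Nx
      (bonded_other_side_indices Hy Hx Ny Nx ltac:(congruence))). lra.
Qed.

Section Refinement.
Variable C : (X -> Prop) -> Prop.
Hypothesis Hk : k_clustering (point_set lp) 3 C.
Hypothesis Hn : nice d (point_set lp) C.

Let HU : exists q, In q lp /\ fst q <> negb U.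
Proof. exists (U, LO); split; [exact HoU|destruct U; discriminate]. Qed.
Let HV : exists q, In q lp /\ fst q <> U.
Proof. exists (negb U, LO); split; [exact HoV|destruct U; discriminate]. Qed.

Lemma bonded_nonorigins_joined t : In (U, t) lp -> t <> LO ->
  same_cluster C (pt (U, t)) (pt (U, t0)).
Proof.
  intros Ht Nt.
  destruct (PeanoNat.Nat.eq_dec (label_index t) (label_index t0)) as [E|NE].
  - assert (Nxj : LX j <> LO) by discriminate.
    apply (same_cluster_trans (y := pt (U, LX j)) (proj1 Hk)).
    + apply (nice_joins_other_indices Hv Hk Hn HoU HV Ht Hxj Nt Nxj); simpl; congruence.
    + apply (nice_joins_other_indices Hv Hk Hn HoU HV Hxj Ht0 Nxj Nt0); simpl; auto.
  - apply (nice_joins_other_indices Hv Hk Hn HoU HV Ht Ht0 Nt Nt0 NE).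
Qed.

(* The origin joins too: otherwise [x_j] and [x'_j] form a cluster without it,
   contradicting [d(x_j, x'_j) > d(x_o, x_j)]. *)
Lemma bonded_side_joined t : In (U, t) lp -> same_cluster C (pt (U, t)) (pt (U, t0)).
Proof.
  intros Ht. destruct (label_eq_dec t LO) as [->|Nt]; [|apply bonded_nonorigins_joined; auto].
  destruct (classic (same_cluster C (pt (U, LO)) (pt (U, t0)))) as [|N]; auto. exfalso.
  pose proof (bonded_nonorigins_joined Hxj ltac:(discriminate)) as S1.
  pose proof (bonded_nonorigins_joined Hx'j ltac:(discriminate)) as S2.
  pose proof (same_cluster_trans (proj1 Hk) S1 (same_cluster_sym S2)) as S12.
  assert (N1 : ~ same_cluster C (pt (U, LX j)) (pt (U, LO)))
    by (intro S3; apply N; exact (same_cluster_trans (proj1 Hk) (same_cluster_sym S3) S1)).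
  pose proof (Hn (point_set_In Hxj) (point_set_In Hx'j) (point_set_In HoU) S12 N1).
  pose proof (pt_dist_pair (Hv Hxj)). rewrite (dist_sym Hd (pt (U, LX' j))) in H. lra.
Qed.

Lemma bonded_other_nonorigins_joined t : In (negb U, t) lp -> t <> LO ->
  same_cluster C (pt (negb U, t)) (pt (negb U, v0)).
Proof.
  intros Ht Nt. destruct (label_eq_dec t v0) as [->|N].
  - apply (same_cluster_refl (proj1 Hk)); apply point_set_In; auto.
  - apply (nice_joins_other_indices Hv Hk Hn HoV HU Ht Hv0 Nt Nv0).
    apply bonded_other_side_indices; auto.
Qed.

Lemma bonded_other_origin_alone t : In (negb U, t) lp -> t <> LO ->
  ~ same_cluster C (pt (negb U, LO)) (pt (negb U, t)).
Proof.
  intros Ht Nt S.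
  apply (three_clustering_not_two_classes (u := pt (U, t0)) (v := pt (negb U, v0)) Hk).
  intros z Dz. destruct (point_set_inv Dz) as ([s tz] & Hz & ->).
  destruct (Bool.bool_dec s U) as [->|Ns]; [left; apply bonded_side_joined; auto|right].
  replace s with (negb U) in * by (destruct s, U; simpl; congruence).
  destruct (label_eq_dec tz LO) as [->|Nz]; [|apply bonded_other_nonorigins_joined; auto].
  exact (same_cluster_trans (proj1 Hk) S (bonded_other_nonorigins_joined Ht Nt)).
Qed.

Lemma bonded_refines x y : point_set lp x -> point_set lp y ->
  same_cluster C x y -> same_block3 B1 B2 B3 x y.
Proof.
  intros Dx Dy Sxy.
  destruct (point_set_inv Dx) as ([sx tx] & Hx & ->), (point_set_inv Dy) as ([sy ty] & Hy & ->).
  destruct (Bool.bool_dec sx sy) as [<-|Ns].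
  2: { exfalso. exact (nice_separates_sides Hv Hk Hn Hx Hy Ns Sxy). }
  destruct (Bool.bool_dec sx U) as [->|Nx]; [left; split; eexists; eauto|].
  replace sx with (negb U) in * by (destruct sx, U; simpl; congruence).
  destruct (label_eq_dec tx LO) as [->|Ntx], (label_eq_dec ty LO) as [->|Nty].
  - right; left; split; reflexivity.
  - exfalso; exact (bonded_other_origin_alone Hy Nty Sxy).
  - exfalso; exact (bonded_other_origin_alone Hx Ntx (same_cluster_sym Sxy)).
  - right; right; split; eexists; eauto.
Qed.

End Refinement.

Lemma bonded_unique_nice_witnessed : exists C,
  unique_nice_k_clustering d (point_set lp) 3 C /\
  (forall t, In (U, t) lp -> same_cluster C (pt (U, LO)) (pt (U, t))) /\
  (forall t, In (negb U, t) lp -> t <> LO ->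
     ~ same_cluster C (pt (negb U, LO)) (pt (negb U, t))).
Proof.
  exists (blocks3 B1 B2 B3); split; [|split].
  - apply blocks3_unique_nice; [exact bonded_partition|exact bonded_blocks_nice|].
    intros C' Hk' Hn'; apply bonded_refines; auto.
  - intros t Ht. apply same_cluster_blocks3. left; split; eexists; eauto.
  - intros t Ht Nt. rewrite same_cluster_blocks3.
    assert (Hinj : forall p q, In p lp -> In q lp -> pt p = pt q -> p = q)
      by (intros p q Hp Hq; apply pt_inj; auto).
    intros [[(t1 & H1 & E1) _]|[[_ E]|[(t1 & H1 & N1 & E1) _]]];
      [apply Hinj in E1|apply Hinj in E|apply Hinj in E1]; auto; try congruence.
    destruct U; discriminate.
Qed.

End Bonded.

Lemma bonded_unique_nice lp U j : bonded lp U j -> exists C,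
  unique_nice_k_clustering d (point_set lp) 3 C /\
  (forall t, In (U, t) lp -> same_cluster C (pt (U, LO)) (pt (U, t))) /\
  (forall t, In (negb U, t) lp -> t <> LO ->
     ~ same_cluster C (pt (negb U, LO)) (pt (negb U, t))).
Proof.
  intros (Hv & HoU & HoV & Hxj & Hx'j & (t0 & Ht0 & Nt0 & It0) & Hpairless & (v0 & Hv0 & Nv0)).
  eapply bonded_unique_nice_witnessed; eauto.
Qed.

(* Bit [m] of [f] selects the configuration from which [x_(m+1)] is taken. *)
Definition prefix (f : list bool) : list (bool * label) :=
  map (fun m => (nth m f false, LX (S m))) (seq 0 (length f)).

Definition probe (i k : nat) (s : bool) : list (bool * label) :=
  [(true, LO); (false, LO); (true, LX' (S i)); (false, LX' (S i)); (s, LX' (S k))].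

Lemma In_prefix f p : In p (prefix f) <->
  exists m, (m < length f)%nat /\ p = (nth m f false, LX (S m)).
Proof.
  unfold prefix; rewrite in_map_iff; split.
  - intros (m & <- & Hm); apply in_seq in Hm; exists m; split; [lia|auto].
  - intros (m & Hm & ->); exists m; split; auto; apply in_seq; lia.
Qed.

Lemma NoDup_prefix_probe f i k s : i <> k -> NoDup (prefix f ++ probe i k s).
Proof.
  intros Nik. apply NoDup_app.
  - apply NoDup_map_inv with (f := fun p => snd p). unfold prefix; rewrite map_map; simpl.
    apply Injective_map_NoDup; [intros a b E; injection E; auto|apply seq_NoDup].
  - repeat constructor; simpl; intuition congruence.
  - intros p Hp Hq. apply In_prefix in Hp as (m & _ & ->).
    simpl in Hq; intuition discriminate.
Qed.

Lemma bonded_prefix_probe f i k s : length f = M -> (i < M)%nat -> (k < M)%nat -> i <> k ->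
  s = nth i f false \/ nth k f false = nth i f false ->
  bonded (prefix f ++ probe i k s) (nth i f false) (S i).
Proof.
  intros Hf Hi Hk Nik Hs. remember (nth i f false) as U eqn:HU.
  assert (Hmem : forall p, In p (prefix f ++ probe i k s) <->
    (exists m, (m < M)%nat /\ p = (nth m f false, LX (S m))) \/ In p (probe i k s))
    by (intro p; rewrite in_app_iff, In_prefix, Hf; reflexivity).
  assert (Ho : forall b, In (b, LO) (probe i k s)) by (intros []; simpl; auto).
  assert (Hx' : forall b, In (b, LX' (S i)) (probe i k s)) by (intros []; simpl; auto).
  unfold bonded; repeat split.
  - intros p Hp. apply Hmem in Hp as [(m & Hm & ->)|Hp]; unfold valid_point; simpl in *;
      [lia|intuition (subst; simpl; auto; lia)].
  - apply Hmem; auto.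
  - apply Hmem; auto.
  - apply Hmem; left; exists i; subst; auto.
  - apply Hmem; auto.
  - destruct Hs as [->|Hs].
    + exists (LX' (S k)); repeat split; [apply Hmem; right; simpl; tauto|discriminate|].
      simpl; congruence.
    + exists (LX (S k)); repeat split; [apply Hmem; left; exists k; rewrite Hs; auto|
        discriminate|simpl; congruence].
  - intros m Hx Hx'm.
    apply Hmem in Hx as [(m' & _ & E)|Hx]; [|simpl in Hx; intuition discriminate].
    injection E as E1 ->.
    apply Hmem in Hx'm as [(m'' & _ & E)|Hx'm]; [discriminate|].
    simpl in Hx'm; destruct Hx'm as [E|[E|[E|[E|[E|[]]]]]]; inversion E; subst;
      destruct Hs as [Hs|Hs]; subst; destruct (nth _ f false); simpl in *; congruence.
  - exists (LX' (S i)); split; [apply Hmem; auto|discriminate].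
Qed.

Ltac point_cases H :=
  let p := fresh "p" in let Hp := fresh "Hp" in
  destruct (point_set_inv H) as (p & Hp & ->); simpl in Hp;
  repeat destruct Hp as [<-|Hp]; try contradiction.

Ltac in_point_set := apply point_set_In; simpl; tauto.

Section SingleConfigurationSide.
Variables (s : bool) (a a' : label).
Hypothesis Va : valid_point (s, a).
Hypothesis Va' : valid_point (s, a').
Hypothesis Na : a <> LO.
Hypothesis Na' : a' <> LO.
Hypothesis Naa' : a <> a'.
Hypothesis Hpair : d (pt (s, LO)) (pt (s, a)) < d (pt (s, a)) (pt (s, a')).

Local Notation xo := (pt (s, LO)).
Local Notation xa := (pt (s, a)).
Local Notation xa' := (pt (s, a')).
Local Notation xq := (pt (negb s, LO)).

Let Hs : negb s <> s := Bool.no_fixpoint_negb s.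

Lemma pair_joins_origin (D : X -> Prop) C : is_clustering D C -> nice d D C ->
  D xo -> D xa -> D xa' -> same_cluster C xa xa' -> same_cluster C xo xa.
Proof.
  intros Hcl Hn Do Dx Dx' S. apply same_cluster_sym.
  destruct (classic (same_cluster C xa xo)) as [|N]; auto. exfalso.
  pose proof (Hn _ _ _ Dx Dx' Do S N).
  rewrite (dist_sym Hd xa'), (dist_sym Hd xo) in *; lra.
Qed.

Section Nearer.
Hypothesis Hnear : d xo xa < d xo xa'.
Local Notation lp := [(s, LO); (s, a); (s, a'); (negb s, LO)].

Let Hv : all_valid lp.
Proof. intros p Hp; simpl in Hp; intuition (subst; auto); exact I. Qed.

Let B1 : X -> Prop := fun z => In z [xo; xa].
Let B2 : X -> Prop := fun z => In z [xa'].
Let B3 : X -> Prop := fun z => In z [xq].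

Lemma nearer_partition : partition3 (point_set lp) B1 B2 B3.
Proof.
  apply (partition3_of_lists (l1 := [xo; xa]) (l2 := [xa']) (l3 := [xq])); try discriminate.
  - reflexivity.
  - apply (NoDup_points (lp := lp)); auto. repeat constructor; simpl; intuition congruence.
Qed.

Lemma nearer_blocks_nice : nice d (point_set lp) (blocks3 B1 B2 B3).
Proof.
  apply (blocks3_nice Hd); intros z y w Dz Dy Dw Nzy Szy Nzw.
  unfold same_block3, B1, B2, B3 in *; simpl in Szy, Nzw.
  point_cases Dw;
    destruct Szy as [[[<-|[<-|[]]] [<-|[<-|[]]]]|[[[<-|[]] [<-|[]]]|[[<-|[]] [<-|[]]]]];
    try congruence; try (exfalso; apply Nzw; tauto).
  all: try (apply pt_dist_same_lt_other; solve [auto | exact I]).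
  all: pose proof (dist_sym Hd xa xo); pose proof (dist_sym Hd xa' xo);
    pose proof (dist_sym Hd xa' xa); lra.
Qed.

Lemma nearer_refines C : k_clustering (point_set lp) 3 C -> nice d (point_set lp) C ->
  forall z y, point_set lp z -> point_set lp y -> same_cluster C z y ->
  same_block3 B1 B2 B3 z y.
Proof.
  intros Hk Hn z y Dz Dy Szy. pose proof (proj1 Hk) as Hcl.
  assert (Hall : ~ (same_cluster C xo xa /\ same_cluster C xo xa')).
  { intros [Sx Sx']. apply (three_clustering_not_two_classes (u := xo) (v := xq) Hk).
    intros w Dw; point_cases Dw; [left|left|left|right];
      solve [apply (same_cluster_refl Hcl); in_point_set | apply same_cluster_sym; auto]. }
  assert (Nox' : ~ same_cluster C xo xa').
  { intro S. destruct (classic (same_cluster C xo xa)) as [Sx|Nx]; [tauto|].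
    pose proof (Hn xo xa' xa ltac:(in_point_set) ltac:(in_point_set) ltac:(in_point_set) S Nx).
    rewrite (dist_sym Hd xa xo), (dist_sym Hd xa' xo) in *. lra. }
  assert (Nxx' : ~ same_cluster C xa xa').
  { intro S. pose proof (pair_joins_origin Hcl Hn ltac:(in_point_set) ltac:(in_point_set)
      ltac:(in_point_set) S) as So.
    exact (Hall (conj So (same_cluster_trans Hcl So S))). }
  unfold same_block3, B1, B2, B3; simpl.
  point_cases Dz; point_cases Dy; try tauto; exfalso;
    first [ exact (Nox' Szy) | exact (Nox' (same_cluster_sym Szy))
          | exact (Nxx' Szy) | exact (Nxx' (same_cluster_sym Szy))
          | refine (nice_separates_sides Hv Hk Hn _ _ _ Szy); simpl; solve [tauto | congruence] ].
Qed.

Lemma nearer_point_clustering : exists C, unique_nice_k_clustering d (point_set lp) 3 C /\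
  same_cluster C xo xa.
Proof.
  exists (blocks3 B1 B2 B3); split.
  - apply blocks3_unique_nice; [exact nearer_partition|exact nearer_blocks_nice|].
    exact nearer_refines.
  - apply same_cluster_blocks3; left; unfold B1; simpl; auto.
Qed.

End Nearer.

Section Equidistant.
Variable t : label.
Hypothesis Vt : valid_point (negb s, t).
Hypothesis Nt : t <> LO.
Hypothesis Heq : d xo xa = d xo xa'.
Local Notation xt := (pt (negb s, t)).
Local Notation lp := [(s, LO); (s, a); (s, a'); (negb s, LO); (negb s, t)].

Let Hv : all_valid lp.
Proof. intros p Hp; simpl in Hp; intuition (subst; auto); exact I. Qed.

Let B1 : X -> Prop := fun z => In z [xo; xa; xa'].
Let B2 : X -> Prop := fun z => In z [xq].
Let B3 : X -> Prop := fun z => In z [xt].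

Lemma equidistant_partition : partition3 (point_set lp) B1 B2 B3.
Proof.
  apply (partition3_of_lists (l1 := [xo; xa; xa']) (l2 := [xq]) (l3 := [xt])); try discriminate.
  - reflexivity.
  - apply (NoDup_points (lp := lp)); auto. repeat constructor; simpl; intuition congruence.
Qed.

Lemma equidistant_blocks_nice : nice d (point_set lp) (blocks3 B1 B2 B3).
Proof.
  apply (blocks3_nice Hd); intros z y w Dz Dy Dw Nzy Szy Nzw.
  unfold same_block3, B1, B2, B3 in *; simpl in Szy, Nzw.
  point_cases Dw; destruct Szy as [[[<-|[<-|[<-|[]]]] [<-|[<-|[<-|[]]]]]|
    [[[<-|[]] [<-|[]]]|[[<-|[]] [<-|[]]]]];
    try congruence; try (exfalso; apply Nzw; tauto);
    apply pt_dist_same_lt_other; solve [auto | exact I].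
Qed.

Lemma equidistant_refines C : k_clustering (point_set lp) 3 C -> nice d (point_set lp) C ->
  forall z y, point_set lp z -> point_set lp y -> same_cluster C z y ->
  same_block3 B1 B2 B3 z y.
Proof.
  intros Hk Hn z y Dz Dy Szy. pose proof (proj1 Hk) as Hcl.
  (* Joining [xq] and [xt] would split [xo], [xa], [xa'], but equidistance and [Hpair]
     rule out every split. *)
  assert (Nqt : ~ same_cluster C xq xt).
  { intro Sq.
    assert (Hall : ~ (same_cluster C xo xa /\ same_cluster C xo xa')).
    { intros [Sx Sx']. apply (three_clustering_not_two_classes (u := xo) (v := xq) Hk).
      intros w Dw; point_cases Dw; [left|left|left|right|right];
        solve [apply (same_cluster_refl Hcl); in_point_set | apply same_cluster_sym; auto]. }
    assert (Hjoin : forall u v, d xo u = d xo v -> point_set lp u -> point_set lp v ->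
      same_cluster C xo u -> same_cluster C xo v).
    { intros u v E Du Dv S. destruct (classic (same_cluster C xo v)) as [|N]; auto. exfalso.
      pose proof (Hn xo u v ltac:(in_point_set) Du Dv S N).
      rewrite (dist_sym Hd u), (dist_sym Hd v) in *; lra. }
    destruct (three_clustering_pigeonhole (a := xo) (b := xa) (c := xa') (e := xq) Hk)
      as [F|[F|[F|[F|[F|F]]]]]; try in_point_set;
      try (refine (nice_separates_sides Hv Hk Hn _ _ _ F); simpl; solve [tauto | congruence]).
    - exact (Hall (conj F (Hjoin xa xa' Heq ltac:(in_point_set) ltac:(in_point_set) F))).
    - exact (Hall (conj (Hjoin xa' xa (eq_sym Heq) ltac:(in_point_set) ltac:(in_point_set) F) F)).
    - pose proof (pair_joins_origin Hcl Hn ltac:(in_point_set) ltac:(in_point_set)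
        ltac:(in_point_set) F) as So.
      exact (Hall (conj So (same_cluster_trans Hcl So F))). }
  unfold same_block3, B1, B2, B3; simpl.
  point_cases Dz; point_cases Dy; try tauto; exfalso;
    first [ exact (Nqt Szy) | exact (Nqt (same_cluster_sym Szy))
          | refine (nice_separates_sides Hv Hk Hn _ _ _ Szy); simpl; solve [tauto | congruence] ].
Qed.

Lemma equidistant_pair_clustering : exists C,
  unique_nice_k_clustering d (point_set lp) 3 C /\ same_cluster C xo xa.
Proof.
  exists (blocks3 B1 B2 B3); split.
  - apply blocks3_unique_nice; [exact equidistant_partition|exact equidistant_blocks_nice|].
    exact equidistant_refines.
  - apply same_cluster_blocks3; left; unfold B1; simpl; auto.
Qed.

End Equidistant.

End SingleConfigurationSide.

Section Algorithm.
Variables (State : Type) (s0 : State) (tau : State -> X -> State)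
  (omega : State -> (X -> Prop) -> Prop).
Hypothesis Halg : forall l : list X, NoDup l ->
  forall C, unique_nice_k_clustering d (fun x => In x l) 3 C ->
  fam_eq (restrict (omega (run tau s0 l)) (fun x => In x l)) C.

Lemma output_same_cluster lp C x y : all_valid lp -> NoDup lp ->
  unique_nice_k_clustering d (point_set lp) 3 C -> point_set lp x -> point_set lp y ->
  same_cluster C x y <-> same_cluster (omega (run tau s0 (map pt lp))) x y.
Proof.
  intros Hv Hn HC Dx Dy.
  apply (fam_eq_restrict_same_cluster (Halg (NoDup_points Hv Hn) HC) Dx Dy).
Qed.

(* After the common probe, [x_o] and [x'_(i+1)] of the configuration [nth i f1] are
   clustered together for [f1] and apart for [f2]. *)
Lemma prefix_collision f1 f2 i k : length f1 = M -> length f2 = M ->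
  (i < M)%nat -> (k < M)%nat -> i <> k ->
  nth i f1 false <> nth i f2 false -> nth k f2 false = nth i f2 false ->
  run tau s0 (map pt (prefix f1)) = run tau s0 (map pt (prefix f2)) -> False.
Proof.
  intros L1 L2 Hi Hk Nik Ndiff Hk2 Hstate.
  assert (E2 : nth i f2 false = negb (nth i f1 false))
    by (destruct (nth i f1 false), (nth i f2 false); simpl; congruence).
  set (s := nth i f1 false) in *.
  pose proof (bonded_prefix_probe L1 Hi Hk Nik (s := s) (or_introl eq_refl)) as B1.
  pose proof (bonded_prefix_probe L2 Hi Hk Nik (s := s) (or_intror Hk2)) as B2.
  rewrite E2 in B2.
  destruct (bonded_unique_nice B1) as (C1 & U1 & J1 & _).
  destruct (bonded_unique_nice B2) as (C2 & U2 & _ & A2). rewrite Bool.negb_involutive in A2.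
  assert (Ho : forall f, In (s, LO) (prefix f ++ probe i k s))
    by (intro f; apply in_app_iff; right; destruct s; simpl; auto).
  assert (Hx : forall f, In (s, LX' (S i)) (prefix f ++ probe i k s))
    by (intro f; apply in_app_iff; right; destruct s; simpl; auto).
  apply (A2 (LX' (S i)) (Hx f2) ltac:(discriminate)).
  apply (output_same_cluster (proj1 B2) (NoDup_prefix_probe f2 s Nik) U2);
    try apply point_set_In; auto.
  rewrite !map_app, run_app, <- Hstate, <- run_app, <- map_app.
  apply (output_same_cluster (proj1 B1) (NoDup_prefix_probe f1 s Nik) U1);
    try apply point_set_In; auto.
Qed.

Section SingleState.
Hypothesis Hone : forall s s' : State, s = s'.

Lemma single_state_output lp C u v : all_valid lp -> NoDup lp ->
  unique_nice_k_clustering d (point_set lp) 3 C -> point_set lp u -> point_set lp v ->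
  same_cluster C u v <-> same_cluster (omega s0) u v.
Proof.
  intros Hv Hn HC Du Dv. rewrite (Hone s0 (run tau s0 (map pt lp))).
  apply (output_same_cluster Hv Hn HC Du Dv).
Qed.

Lemma single_state_separates_origin s t : valid_point (s, t) -> t <> LO ->
  ~ same_cluster (omega s0) (pt (s, LO)) (pt (s, t)).
Proof.
  intros Vt Nt S. pose proof (Bool.no_fixpoint_negb s) as Hs.
  assert (Hv : all_valid [(s, LO); (s, t); (negb s, LO)])
    by (intros p Hp; simpl in Hp; intuition (subst; auto); exact I).
  assert (Hnd : NoDup [(s, LO); (s, t); (negb s, LO)])
    by (repeat constructor; simpl; intuition congruence).
  pose proof (NoDup_points Hv Hnd) as Hndp.
  apply (single_state_output Hv Hnd (singletons_unique_nice Hd Hndp)) in S; try in_point_set.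
  rewrite same_cluster_blocks3 in S; unfold same_block3 in S; simpl in S.
  apply NoDup_cons_iff in Hndp as [N1 _]; simpl in N1; intuition congruence.
Qed.

Lemma single_state_contradiction : (1 <= M)%nat -> False.
Proof.
  intros HM.
  assert (Vx : valid_point (true, LX 1)) by (unfold valid_point; simpl; lia).
  assert (Vx' : valid_point (true, LX' 1)) by (unfold valid_point; simpl; lia).
  assert (Vy : valid_point (false, LX 1)) by (unfold valid_point; simpl; lia).
  assert (Hjoined : forall lp C t, valid_point (true, t) -> t <> LO -> all_valid lp ->
    NoDup lp -> unique_nice_k_clustering d (point_set lp) 3 C -> In (true, LO) lp ->
    In (true, t) lp -> same_cluster C (pt (true, LO)) (pt (true, t)) -> False).
  { intros lp C t Vt Nt Hv Hn HC Ho Ht S. apply (single_state_separates_origin Vt Nt).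
    apply (single_state_output Hv Hn HC); auto; apply point_set_In; auto. }
  pose proof (pt_dist_pair Vx) as Hpx.
  pose proof (dist_sym Hd (pt (true, LX 1)) (pt (true, LX' 1))).
  destruct (Rtotal_order (d (pt (true, LO)) (pt (true, LX 1)))
    (d (pt (true, LO)) (pt (true, LX' 1)))) as [Hlt|[Heq|Hgt]].
  - destruct (nearer_point_clustering Vx Vx' ltac:(discriminate) ltac:(discriminate)
      ltac:(discriminate) Hpx Hlt) as (C & HC & S).
    refine (Hjoined _ C (LX 1) Vx _ _ _ HC _ _ S); [discriminate| | | simpl; tauto..].
    + intros p Hp; simpl in Hp; intuition (subst; auto); exact I.
    + repeat constructor; simpl; intuition congruence.
  - destruct (equidistant_pair_clustering Vx Vx' ltac:(discriminate) ltac:(discriminate)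
      ltac:(discriminate) Hpx Vy ltac:(discriminate) Heq) as (C & HC & S).
    refine (Hjoined _ C (LX 1) Vx _ _ _ HC _ _ S); [discriminate| | | simpl; tauto..].
    + intros p Hp; simpl in Hp; intuition (subst; auto); exact I.
    + repeat constructor; simpl; intuition congruence.
  - destruct (nearer_point_clustering Vx' Vx ltac:(discriminate) ltac:(discriminate)
      ltac:(discriminate) ltac:(lra) Hgt) as (C & HC & S).
    refine (Hjoined _ C (LX' 1) Vx' _ _ _ HC _ _ S); [discriminate| | | simpl; tauto..].
    + intros p Hp; simpl in Hp; intuition (subst; auto); exact I.
    + repeat constructor; simpl; intuition congruence.
Qed.

End SingleState.

Lemma few_states_contradiction b (enc : State -> list bool) :
  (forall s, length (enc s) = b) -> (forall s s', enc s = enc s' -> s = s') ->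
  (1 <= b)%nat -> (2 * b <= M)%nat -> False.
Proof.
  intros Hlen Hinj Hb HM.
  destruct (pigeonhole (f := fun f => enc (run tau s0 (map pt (prefix f))))
    (NoDup_prefix_family M) (L := bool_lists b)) as (f1 & f2 & H1 & H2 & N & E).
  - intros f _; apply In_bool_lists, Hlen.
  - rewrite length_bool_lists, length_prefix_family.
    assert (2 ^ b <= 2 ^ (M - 1))%nat by (apply PeanoNat.Nat.pow_le_mono_r; lia). lia.
  - apply Hinj in E.
    pose proof (length_in_prefix_family (M := M) ltac:(lia) H1) as L1.
    pose proof (length_in_prefix_family (M := M) ltac:(lia) H2) as L2.
    destruct (prefix_family_split (M := M) ltac:(lia) H1 H2 N)
      as (i & k & Hi & Hk & Nik & Hne & [Hk1|Hk2]).
    + exact (prefix_collision L2 L1 Hi Hk Nik (not_eq_sym Hne) Hk1 (eq_sym E)).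
    + exact (prefix_collision L1 L2 Hi Hk Nik Hne Hk2 E).
Qed.

Lemma bounded_storage_contradiction b (enc : State -> list bool) :
  (forall s, length (enc s) = b) -> (forall s s', enc s = enc s' -> s = s') ->
  (0 < M)%nat -> (2 * b <= M)%nat -> False.
Proof.
  intros Hlen Hinj HM Hb. destruct b as [|b].
  - apply single_state_contradiction; [|lia]. intros s s'; apply Hinj.
    pose proof (Hlen s); pose proof (Hlen s').
    destruct (enc s), (enc s'); simpl in *; congruence.
  - apply (few_states_contradiction (b := S b) Hlen Hinj); lia.
Qed.

End Algorithm.

End TwoConfigurations.

Theorem mainTheorem2 :
  forall (X : Type) (d : X -> X -> R), is_metric d ->
  forall (M : nat), (0 < M)%nat ->
  forall (P Q : config X), is_M_config d M P -> is_M_config d M Q ->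
  (forall u v, in_config M P u -> in_config M Q v -> 4 <= d u v) ->
  forall (b : nat), (2 * b <= M)%nat ->
  ~ exists (s0 : Vector.t bool b) (tau : Vector.t bool b -> X -> Vector.t bool b)
           (omega : Vector.t bool b -> (X -> Prop) -> Prop),
      (forall s, is_clustering (fun _ : X => True) (omega s)) /\
      (forall (l : list X), List.NoDup l ->
        forall C, unique_nice_k_clustering d (fun x => List.In x l) 3 C ->
        fam_eq (restrict (omega (run tau s0 l)) (fun x => List.In x l)) C).
Proof.
  intros X d Hd M HM P Q HP HQ Hfar b Hb (s0 & tau & omega & _ & Halg).
  apply (bounded_storage_contradiction Hd HP HQ Hfar Halg (enc := @VectorDef.to_list bool b)
    (b := b)); auto.
  - intro s; apply VectorSpec.length_to_list.
  - intros s s'; apply VectorSpec.to_list_inj.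
Qed.
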